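(* Let $\Pi:X\to T$ be a tree of hyperbolic metric spaces satisfying the qi embedded condition with parameters $\delta_0,L_0,f$, and suppose $X$ is $\delta_0$-hyperbolic. Given $k\ge1$ there is $R=R(k,\delta_0)\ge0$ (depending only on $k$ and the parameters) such that the following holds. Let $T'\subseteq T$ be a geodesic ray in $T$ whose vertices are identified with $n\in\{0\}\cup\mathbb N$ (in order), and let $X_n$ denote the vertex space over $n$ with its intrinsic metric $d_{X_n}$. Let $\alpha,\beta$ be two $k$-qi sections of $T'$ which converge to the same point of $\partial X$. Then there exists $N\in\mathbb N$ such that $d_{X_n}(\alpha(n),\beta(n))\le R$ for all $n\ge N$.
   Context: Tree of hyperbolic metric spaces satisfying the qi embedded condition: $T$ is a simplicial tree, $(X,d)$ a geodesic metric space (all spaces other than $T$ are proper), $\Pi:X\to T$ a surjective 1-Lipschitz map. For a vertex $b$ let $X_b=\Pi^{-1}(b)$ with its induced length metric $d_b$; for an edge $e$ with midpoint $m_e$ let $X_e=\Pi^{-1}(m_e)$ with induced length metric $d_e$. With parameters $\delta_0\ge0$, $L_0\ge1$ and a proper function $f:\mathbb R_{\ge0}\to\mathbb R_{\ge0}$ one requires: (1) all $X_b$, $X_e$ are $\delta_0$-hyperbolic; (2) for a vertex $b$ and $u,w\in X_b$, $d_X(u,w)\le C$ implies $d_b(u,w)\le f(C)$, and likewise for edge spaces; (3) for each edge $e$ joining vertices $b,b'$ there is a map $f_e:X_e\times[0,1]\to\Pi^{-1}(e)$ such that $\Pi\circ f_e$ is the projection to $[0,1]$ followed by the identification $[0,1]\cong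 e$, $f_e$ restricted to $X_e\times(0,1)$ is an isometry onto $\Pi^{-1}(\text{interior of }e)$ with its path metric, and the restrictions to $X_e\times\{0\}$, $X_e\times\{1\}$ are $L_0$-qi embeddings into $X_b$, $X_{b'}$. A $k$-qi embedding means a $(k,k)$-quasi-isometric embedding. A $k$-qi section of a subtree $T'\subseteq T$ is a $k$-qi embedding $s:T'\to X$ with $\Pi\circ s$ equal to the identity on the vertex set of $T'$. *)

From Stdlib Require Import Reals Lra List ClassicalEpsilon.
Import ListNotations.
Open Scope R_scope.

Set Implicit Arguments.

Section Metric.
Variable X : Type.

Definition full : X -> Prop := fun _ => True.

Definition metric_on (A : X -> Prop) (dA : X -> X -> R) : Prop :=
  (forall x, A x -> dA x x = 0) /\
  (forall x y, A x -> A y -> 0 <= dA x y) /\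
  (forall x y, A x -> A y -> dA x y = 0 -> x = y) /\
  (forall x y, A x -> A y -> dA x y = dA y x) /\
  (forall x y z, A x -> A y -> A z -> dA x z <= dA x y + dA y z).

Definition geodesic_seg (A : X -> Prop) (dA : X -> X -> R)
    (x y : X) (gamma : R -> X) : Prop :=
  gamma 0 = x /\ gamma (dA x y) = y /\
  (forall s, 0 <= s <= dA x y -> A (gamma s)) /\
  (forall s t, 0 <= s <= dA x y -> 0 <= t <= dA x y ->
     dA (gamma s) (gamma t) = Rabs (s - t)).

Definition geodesic_space (A : X -> Prop) (dA : X -> X -> R) : Prop :=
  metric_on A dA /\
  forall x y, A x -> A y -> exists gamma, geodesic_seg A dA x y gamma.

Definition hyperbolic (A : X -> Prop) (dA : X -> X -> R) (delta : R) : Prop :=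
  geodesic_space A dA /\
  forall x y z g1 g2 g3, A x -> A y -> A z ->
    geodesic_seg A dA x y g1 -> geodesic_seg A dA y z g2 ->
    geodesic_seg A dA z x g3 ->
    forall s, 0 <= s <= dA x y ->
      exists t,
        (0 <= t <= dA y z /\ dA (g1 s) (g2 t) <= delta) \/
        (0 <= t <= dA z x /\ dA (g1 s) (g3 t) <= delta).

(* proper: closed balls are (sequentially) compact *)
Definition proper_space (A : X -> Prop) (dA : X -> X -> R) : Prop :=
  forall x rho (u : nat -> X), A x ->
    (forall n, A (u n) /\ dA x (u n) <= rho) ->
    exists (phi : nat -> nat) y,
      (forall n, (phi n < phi (S n))%nat) /\ A y /\
      forall eps, 0 < eps -> exists N, forall n, (N <= n)%nat ->
        dA (u (phi n)) y < eps.

Definition path_in (d : X -> X -> R) (A : X -> Prop) (u w : X)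
    (gamma : R -> X) : Prop :=
  gamma 0 = u /\ gamma 1 = w /\
  (forall t, 0 <= t <= 1 -> A (gamma t)) /\
  (forall t, 0 <= t <= 1 -> forall eps, 0 < eps -> exists eta, 0 < eta /\
     forall s, 0 <= s <= 1 -> Rabs (s - t) < eta -> d (gamma s) (gamma t) < eps).

Fixpoint psum (d : X -> X -> R) (gamma : R -> X) (l : list R) : R :=
  match l with
  | a :: ((b :: _) as l') => d (gamma a) (gamma b) + psum d gamma l'
  | _ => 0
  end.

Fixpoint incr (l : list R) : Prop :=
  match l with
  | a :: ((b :: _) as l') => a <= b /\ incr l'
  | _ => True
  end.

(* length(gamma) <= L  (length = sup over partitions) *)
Definition length_le (d : X -> X -> R) (gamma : R -> X) (L : R) : Prop :=
  forall l : list R, incr l -> (forall t, In t l -> 0 <= t <= 1) ->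
    psum d gamma l <= L.

(* r is the induced length (path) metric distance in A between u and w:
   the infimum of lengths of paths in A joining u and w. *)
Definition ilm (d : X -> X -> R) (A : X -> Prop) (u w : X) (r : R) : Prop :=
  (forall L, (exists gamma, path_in d A u w gamma /\ length_le d gamma L) -> r <= L) /\
  (forall r', (forall L, (exists gamma, path_in d A u w gamma /\ length_le d gamma L)
                 -> r' <= L) -> r' <= r).

Definition gprod (d : X -> X -> R) (p x y : X) : R :=
  (d p x + d p y - d x y) / 2.

Definition converges_at_infinity (d : X -> X -> R) (x : nat -> X) : Prop :=
  forall p M, exists N, forall m n, (N <= m)%nat -> (N <= n)%nat ->
    M <= gprod d p (x m) (x n).

Definition same_boundary_point (d : X -> X -> R) (x y : nat -> X) : Prop :=
  converges_at_infinity d x /\ converges_at_infinity d y /\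
  forall p M, exists N, forall m n, (N <= m)%nat -> (N <= n)%nat ->
    M <= gprod d p (x m) (y n).

End Metric.

Section Tree.
Variable V : Type.
Variable E : V -> V -> Prop.

Fixpoint walk (u v : V) (n : nat) : Prop :=
  match n with
  | O => u = v
  | S m => exists w, E u w /\ walk w v m
  end.

Fixpoint chain (l : list V) : Prop :=
  match l with
  | a :: ((b :: _) as l') => E a b /\ chain l'
  | _ => True
  end.

Definition is_simplicial_tree : Prop :=
  (forall u, ~ E u u) /\ (forall u v, E u v -> E v u) /\
  (forall u v, exists n, walk u v n) /\
  ~ (exists (v0 : V) (l : list V),
        (2 <= length l)%nat /\ NoDup (v0 :: l) /\ chain (v0 :: l) /\
        E (last l v0) v0).

Definition gdist_is (u v : V) (n : nat) : Prop :=
  walk u v n /\ forall m, (m < n)%nat -> ~ walk u v m.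

Definition gd (u v : V) : nat := epsilon (inhabits O) (fun n => gdist_is u v n).

(* points of the geometric realisation |T| (edge length 1):
   TV v is the vertex v, TE u v t the point of the edge [u,v] at distance
   t from u (0 < t < 1); TE u v t and TE v u (1-t) denote the same point. *)
Inductive tpt : Type := TV (v : V) | TE (u v : V) (t : R).

Definition valid_pt (p : tpt) : Prop :=
  match p with TV _ => True | TE u v t => E u v /\ 0 < t < 1 end.

Definition pv (p : tpt) (a : V) : R :=
  match p with
  | TV v => INR (gd v a)
  | TE u v t => Rmin (t + INR (gd u a)) (1 - t + INR (gd v a))
  end.

Definition tdist (p q : tpt) : R :=
  match p, q with
  | TV a, _ => pv q a
  | TE _ _ _, TV b => pv p b
  | TE u v t, TE u' v' t' =>
      if excluded_middle_informative (u = u' /\ v = v') then Rabs (t - t')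
      else if excluded_middle_informative (u = v' /\ v = u') then Rabs (t - (1 - t'))
      else Rmin (t + pv q u) (1 - t + pv q v)
  end.

Definition ept (b b' : V) (t : R) : tpt :=
  if excluded_middle_informative (t = 0) then TV b
  else if excluded_middle_informative (t = 1) then TV b' else TE b b' t.

Definition geodesic_ray (r : nat -> V) : Prop :=
  forall m n, gd (r m) (r n) = (if (m <=? n)%nat then n - m else m - n)%nat.

End Tree.

Section TreeOfSpaces.
Variables (X V : Type) (d : X -> X -> R) (E : V -> V -> Prop)
          (Pi : X -> tpt V).

Definition Xv (b : V) : X -> Prop := fun x => Pi x = TV b.
Definition Xe (b b' : V) : X -> Prop :=
  fun x => Pi x = TE b b' (1/2) \/ Pi x = TE b' b (1/2).
Definition Xint (b b' : V) : X -> Prop :=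
  fun x => exists t, 0 < t < 1 /\ (Pi x = TE b b' t \/ Pi x = TE b' b t).

Definition proper_fun (f : R -> R) : Prop :=
  (forall t, 0 <= t -> 0 <= f t) /\
  forall M, exists N, forall t, 0 <= t -> f t <= M -> t <= N.

Definition qi_embedding_ineq (k dsrc dtgt : R) : Prop :=
  (1 / k) * dsrc - k <= dtgt /\ dtgt <= k * dsrc + k.

Definition edge_map_cond (db : V -> X -> X -> R) (de : V -> V -> X -> X -> R)
    (L0 : R) (b b' : V) (fe : X -> R -> X) : Prop :=
  (forall x t, Xe b b' x -> 0 <= t <= 1 ->
     Pi (fe x t) = ept b b' t \/ (0 < t < 1 /\ Pi (fe x t) = TE b' b (1 - t))) /\
  (exists dint : X -> X -> R,
     (forall u w, Xint b b' u -> Xint b b' w -> ilm d (Xint b b') u w (dint u w)) /\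
     (* isometry of X_e x (0,1) (product metric) onto Pi^{-1}(int e) *)
     (forall x y s t, Xe b b' x -> Xe b b' y -> 0 < s < 1 -> 0 < t < 1 ->
        dint (fe x s) (fe y t) = sqrt ((de b b' x y) ^ 2 + (s - t) ^ 2)) /\
     (forall z, Xint b b' z -> exists x t, Xe b b' x /\ 0 < t < 1 /\ fe x t = z)) /\
  (forall x y, Xe b b' x -> Xe b b' y ->
     qi_embedding_ineq L0 (de b b' x y) (db b (fe x 0) (fe y 0))) /\
  (forall x y, Xe b b' x -> Xe b b' y ->
     qi_embedding_ineq L0 (de b b' x y) (db b' (fe x 1) (fe y 1))).

Definition tree_of_hyp_spaces (db : V -> X -> X -> R) (de : V -> V -> X -> X -> R)
    (delta0 L0 : R) (f : R -> R) : Prop :=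
  is_simplicial_tree E /\
  geodesic_space (@full X) d /\ proper_space (@full X) d /\
  (forall x, valid_pt E (Pi x)) /\
  (forall p, valid_pt E p -> exists x, Pi x = p) /\
  (forall x y, tdist E (Pi x) (Pi y) <= d x y) /\
  (forall b u w, Xv b u -> Xv b w -> ilm d (Xv b) u w (db b u w)) /\
  (forall b b' u w, E b b' -> Xe b b' u -> Xe b b' w ->
     ilm d (Xe b b') u w (de b b' u w)) /\
  0 <= delta0 /\ 1 <= L0 /\ proper_fun f /\
  (forall b, hyperbolic (Xv b) (db b) delta0 /\ proper_space (Xv b) (db b)) /\
  (forall b b', E b b' ->
     hyperbolic (Xe b b') (de b b') delta0 /\ proper_space (Xe b b') (de b b')) /\
  (forall b u w C, Xv b u -> Xv b w -> d u w <= C -> db b u w <= f C) /\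
  (forall b b' u w C, E b b' -> Xe b b' u -> Xe b b' w -> d u w <= C ->
     de b b' u w <= f C) /\
  (forall b b', E b b' -> exists fe, edge_map_cond db de L0 b b' fe).

Definition qi_section (r : nat -> V) (k : R) (s : nat -> X) : Prop :=
  (forall n, Pi (s n) = TV (r n)) /\
  forall m n, qi_embedding_ineq k (INR (gd E (r m) (r n))) (d (s m) (s n)).

End TreeOfSpaces.

(* Both sections are quasi-geodesic sequences in [X]: the upper bound is the qi condition,
   and [|m - n| <= d (alpha m) (beta n)] because [Pi] is 1-Lipschitz onto the geodesic ray.
   Quasi-geodesics are stable in a [delta]-hyperbolic space: a geodesic between points near
   the ends of a chain of [2 ^ J] short steps stays within about [delta J] of the chain, and
   since [J] is logarithmic in the length this keeps every quasi-geodesic within a constant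
   [H (k, delta)] of a geodesic joining its ends, and conversely.  So [alpha n] is near a
   geodesic [[alpha 0, alpha m]]; when the Gromov product of [alpha m] and [beta m] at
   [alpha 0] is large, thin triangles move [alpha n] close to some [beta j], hence [|n - j|]
   is bounded and [d (alpha n) (beta n) <= C (k, delta)].  Condition (2) on vertex spaces
   turns this into [d_{X_n} (alpha n) (beta n) <= f C]. *)

From Stdlib Require Import Reals ZArith Lra Lia Classical ClassicalEpsilon Wf_nat.
Open Scope R_scope.
Set Implicit Arguments.

Lemma ex_least_nat (P : nat -> Prop) n : P n ->
  exists m, P m /\ forall m', (m' < m)%nat -> ~ P m'.
Proof.
  intro Pn.
  destruct (dec_inh_nat_subset_has_unique_least_element P (fun i => classic (P i))
              (ex_intro _ n Pn)) as [m [[Pm Hmin] _]].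
  exists m. split; [exact Pm|]. intros m' Hlt Pm'. specialize (Hmin m' Pm'). lia.
Qed.

Lemma discrete_ivt (t : nat -> R) c m s : 0 <= c ->
  (forall i, (i < m)%nat -> t (S i) <= t i + c) -> t 0%nat <= s <= t m ->
  exists i, (i <= m)%nat /\ t i <= s <= t i + c.
Proof.
  intros Hc. induction m as [|m IH]; intros Hstep Hs.
  - exists 0%nat. split; [lia|lra].
  - destruct (Rle_dec s (t m)) as [Hle|Hgt].
    + destruct IH as [i [Hi Hti]]; [intros i Hi; apply Hstep; lia|lra|].
      exists i. split; [lia|exact Hti].
    + exists m. pose proof (Hstep m (Nat.lt_succ_diag_r m)). split; [lia|lra].
Qed.

Lemma sq_le_4_pow2 n : INR n * INR n <= 4 * INR (2 ^ n).
Proof.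
  rewrite pow_INR. simpl (INR 2).
  induction n as [|n IH].
  - simpl. lra.
  - destruct (le_lt_dec n 2) as [Hn|Hn].
    + destruct n as [|[|[|n]]]; try lia; simpl; lra.
    + rewrite S_INR. simpl pow.
      assert (3 <= INR n) by (replace 3 with (INR 3) by (simpl; lra); apply le_INR; lia).
      nra.
Qed.

Lemma le_INR_to_nat_up x : x <= INR (Z.to_nat (up x)).
Proof.
  destruct (archimed x) as [Hup _].
  destruct (Z_le_gt_dec 0 (up x)) as [Hpos|Hneg].
  - rewrite INR_IZR_INZ, Z2Nat.id by exact Hpos. lra.
  - apply Z.gt_lt, IZR_lt in Hneg. pose proof (pos_INR (Z.to_nat (up x))). lra.
Qed.

Definition pow2_threshold (A B : R) : nat := Z.to_nat (up (4 * (Rabs A + Rabs B) + 1)).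

Lemma linear_le_pow2 A B J : (pow2_threshold A B <= J)%nat -> A + B * INR J <= INR (2 ^ J).
Proof.
  intro HJ. apply le_INR in HJ.
  pose proof (le_INR_to_nat_up (4 * (Rabs A + Rabs B) + 1)) as Hthr.
  fold (pow2_threshold A B) in Hthr.
  pose proof (sq_le_4_pow2 J).
  pose proof (Rabs_pos A). pose proof (Rabs_pos B).
  pose proof (Rle_abs A). pose proof (Rle_abs B).
  assert (1 <= INR J) by lra.
  assert (B * INR J <= Rabs B * INR J) by (apply Rmult_le_compat_r; lra).
  assert (Rabs A <= Rabs A * INR J) by nra.
  assert (4 * (Rabs A + Rabs B) * INR J <= INR J * INR J) by nra.
  lra.
Qed.

(* Away from its ends, a geodesic joining points near the ends of a chain of [2 ^ J] steps
   of length [2 k] stays within [morse_rho J] of the chain.  As [morse_bound] is affine in [J], an estimate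
   [D <= morse_bound J] valid whenever [6 D <= 2 ^ J] bounds [D] absolutely. *)
Definition morse_rho (k delta : R) (J : nat) : R := 2 * delta + delta * INR J + 2 * k.
Definition morse_bound (k delta : R) (J : nat) : R := 1 + 2 * k + (2 * k + 1) * morse_rho k delta J.
Definition morse_index (k delta : R) : nat :=
  pow2_threshold (6 * morse_bound k delta 1 + 1) (6 * ((2 * k + 1) * delta)).
Definition morse_const (k delta : R) : R := morse_bound k delta (morse_index k delta).

Lemma morse_bound_ge0 k delta J : 1 <= k -> 0 <= delta -> 0 <= morse_bound k delta J.
Proof.
  intros Hk Hd. unfold morse_bound, morse_rho.
  assert (0 <= delta * INR J) by (apply Rmult_le_pos; [lra|apply pos_INR]).
  assert (0 <= (2 * k + 1) * (2 * delta + delta * INR J + 2 * k)) by (apply Rmult_le_pos; lra).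
  lra.
Qed.

Lemma morse_index_spec k delta J : (morse_index k delta <= J)%nat ->
  6 * morse_bound k delta (S J) < INR (2 ^ J).
Proof.
  intro HJ. pose proof (linear_le_pow2 _ _ HJ).
  assert (morse_bound k delta (S J) = morse_bound k delta 1 + (2 * k + 1) * delta * INR J)
    by (unfold morse_bound, morse_rho; rewrite S_INR; simpl; ring).
  lra.
Qed.

Lemma dyadic_bound k delta (D : nat) :
  (forall J, (6 * D <= 2 ^ J)%nat -> INR D <= morse_bound k delta J) ->
  INR D <= morse_const k delta.
Proof.
  intro HD. set (J0 := morse_index k delta).
  destruct (le_lt_dec (6 * D) (2 ^ J0)) as [Hle|Hgt]; [exact (HD J0 Hle)|].
  assert (H1 : (1 < 6 * D)%nat) by (pose proof (Nat.pow_nonzero 2 J0); lia).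
  destruct (Nat.log2_up_spec _ H1) as [Hlo Hhi].
  set (J := Nat.log2_up (6 * D)) in *.
  assert (HJ0 : (J0 < J)%nat).
  { destruct (le_lt_dec J J0) as [h|h]; [|exact h].
    pose proof (Nat.pow_le_mono_r 2 _ _ ltac:(lia) h). lia. }
  destruct J as [|J']; [lia|]. simpl Nat.pred in Hlo.
  pose proof (HD _ Hhi). pose proof (morse_index_spec k delta (J:=J') ltac:(lia)).
  apply lt_INR in Hlo. rewrite mult_INR in Hlo. simpl (INR 6) in Hlo. lra.
Qed.

Section HyperbolicSpace.
Variables (X : Type) (d : X -> X -> R) (delta : R).
Hypotheses (hyp : hyperbolic (@full X) d delta) (delta_ge0 : 0 <= delta).

Local Notation geodesic := (geodesic_seg (@full X) d).

Lemma dist_xx x : d x x = 0.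
Proof. destruct hyp as [[[H _] _] _]. exact (H x I). Qed.

Lemma dist_ge0 x y : 0 <= d x y.
Proof. destruct hyp as [[[_ [H _]] _] _]. exact (H x y I I). Qed.

Lemma dist_sym x y : d x y = d y x.
Proof. destruct hyp as [[[_ [_ [_ [H _]]]] _] _]. exact (H x y I I). Qed.

Lemma dist_triangle x y z : d x z <= d x y + d y z.
Proof. destruct hyp as [[[_ [_ [_ [_ H]]]] _] _]. exact (H x y z I I I). Qed.

Lemma geodesic_exists x y : exists g, geodesic x y g.
Proof. destruct hyp as [[_ H] _]. exact (H x y I I). Qed.

Lemma geodesic_triangle_slim x y z g1 g2 g3 :
  geodesic x y g1 -> geodesic y z g2 -> geodesic z x g3 ->
  forall s, 0 <= s <= d x y -> exists t,
    (0 <= t <= d y z /\ d (g1 s) (g2 t) <= delta) \/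
    (0 <= t <= d z x /\ d (g1 s) (g3 t) <= delta).
Proof. destruct hyp as [_ H]. intros. apply (H x y z); auto; exact I. Qed.

Lemma geodesic_start x y g : geodesic x y g -> g 0 = x.
Proof. intros [H _]. exact H. Qed.

Lemma geodesic_end x y g : geodesic x y g -> g (d x y) = y.
Proof. intros [_ [H _]]. exact H. Qed.

Lemma geodesic_dist x y g s t : geodesic x y g ->
  0 <= s <= d x y -> 0 <= t <= d x y -> d (g s) (g t) = Rabs (s - t).
Proof. intros [_ [_ [_ H]]]. exact (H s t). Qed.

Lemma geodesic_dist_start x y g t : geodesic x y g -> 0 <= t <= d x y -> d (g t) x = t.
Proof.
  intros Hg Ht. rewrite <- (geodesic_start Hg) at 1.
  rewrite (geodesic_dist Hg) by lra. rewrite Rminus_0_r. apply Rabs_right. lra.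
Qed.

Lemma geodesic_dist_end x y g t : geodesic x y g -> 0 <= t <= d x y -> d (g t) y = d x y - t.
Proof.
  intros Hg Ht. rewrite <- (geodesic_end Hg) at 1.
  rewrite (geodesic_dist Hg) by lra. rewrite Rabs_left1; lra.
Qed.

Lemma geodesic_rev x y g : geodesic x y g -> geodesic y x (fun t => g (d x y - t)).
Proof.
  intros [H0 [H1 [_ H3]]]. unfold geodesic_seg. rewrite (dist_sym y x). repeat split.
  - rewrite Rminus_0_r. exact H1.
  - rewrite Rminus_diag. exact H0.
  - intros s t Hs Ht. rewrite H3 by lra. rewrite <- Rabs_Ropp. f_equal. ring.
Qed.

Lemma geodesic_subsegment x y g s1 s2 : geodesic x y g ->
  0 <= s1 <= d x y -> 0 <= s2 <= d x y ->
  exists g', geodesic (g s1) (g s2) g' /\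
    forall t, 0 <= t <= d (g s1) (g s2) -> exists s, 0 <= s <= d x y /\ g' t = g s.
Proof.
  intros Hg H1 H2. pose proof (geodesic_dist Hg H1 H2) as Hlen.
  set (sgn := if Rle_dec s1 s2 then 1 else -1).
  assert (Hsgn : s2 - s1 = sgn * Rabs (s1 - s2) /\ (sgn = 1 \/ sgn = -1)).
  { unfold sgn. destruct (Rle_dec s1 s2).
    - rewrite Rabs_left1 by lra. split; [ring|auto].
    - rewrite Rabs_right by lra. split; [ring|auto]. }
  destruct Hsgn as [Hs2 Hsgn].
  assert (Hin : forall t, 0 <= t <= Rabs (s1 - s2) -> 0 <= s1 + sgn * t <= d x y).
  { intros t Ht. destruct Hsgn as [-> | ->]; lra. }
  exists (fun t => g (s1 + sgn * t)). unfold geodesic_seg. rewrite Hlen. repeat split.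
  - rewrite Rmult_0_r, Rplus_0_r. reflexivity.
  - f_equal. lra.
  - intros s t Hs Ht. rewrite (geodesic_dist Hg (Hin s Hs) (Hin t Ht)).
    replace (s1 + sgn * s - (s1 + sgn * t)) with (sgn * (s - t)) by ring.
    rewrite Rabs_mult.
    replace (Rabs sgn) with 1
      by (destruct Hsgn as [-> | ->]; [rewrite Rabs_R1|rewrite Rabs_left]; lra).
    ring.
  - intros t Ht. exists (s1 + sgn * t). split; [exact (Hin t Ht)|reflexivity].
Qed.

Lemma gprod_le_dist_geodesic p x y g t : geodesic x y g -> 0 <= t <= d x y ->
  gprod d p x y <= d p (g t).
Proof.
  intros Hg Ht. pose proof (geodesic_dist_start Hg Ht). pose proof (geodesic_dist_end Hg Ht).
  pose proof (dist_triangle p (g t) x). pose proof (dist_triangle p (g t) y).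
  rewrite (dist_sym (g t) x), (dist_sym (g t) y) in *. unfold gprod. lra.
Qed.

Lemma geodesic_crossing x y g (P Q : X -> Prop) : geodesic x y g ->
  (forall t, 0 <= t <= d x y -> P (g t) \/ Q (g t)) -> P x -> Q y ->
  exists s t, 0 <= s <= d x y /\ 0 <= t <= d x y /\ d (g s) (g t) <= 1 /\ P (g s) /\ Q (g t).
Proof.
  intros Hg HPQ Px Qy. pose proof (dist_ge0 x y) as HL.
  set (tau := fun n => Rmin (INR n) (d x y)).
  assert (Htau : forall n, 0 <= tau n <= d x y /\ Rabs (tau n - tau (S n)) <= 1).
  { intro n. unfold tau. rewrite S_INR. pose proof (pos_INR n).
    unfold Rmin. destruct (Rle_dec (INR n) (d x y)); destruct (Rle_dec (INR n + 1) (d x y));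
      split; try (apply Rabs_le; lra); lra. }
  destruct (INR_unbounded (d x y)) as [n Hn].
  assert (HQn : Q (g (tau n))).
  { unfold tau. rewrite Rmin_right by lra. rewrite (geodesic_end Hg). exact Qy. }
  destruct (ex_least_nat (fun i => Q (g (tau i))) _ HQn) as [[|n'] [HQ Hmin]].
  - exists 0, 0. rewrite (geodesic_start Hg), dist_xx.
    unfold tau in HQ. simpl INR in HQ. rewrite Rmin_left, (geodesic_start Hg) in HQ by lra.
    repeat split; auto; lra.
  - exists (tau n'), (tau (S n')).
    destruct (Htau n') as [H1 Hstep]. destruct (Htau (S n')) as [H2 _].
    repeat split; try lra.
    + rewrite (geodesic_dist Hg H1 H2). exact Hstep.
    + destruct (HPQ _ H1) as [HP|HQ']; [exact HP|].
      exfalso. exact (Hmin n' (Nat.lt_succ_diag_r n') HQ').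
    + exact HQ.
Qed.

Lemma slim_third_side_gprod p x y g1 g2 g3 :
  geodesic p x g1 -> geodesic x y g2 -> geodesic y p g3 ->
  forall s, 0 <= s <= d p x -> d p (g1 s) + delta < gprod d p x y ->
  exists t, 0 <= t <= d y p /\ d (g1 s) (g3 t) <= delta.
Proof.
  intros H1 H2 H3 s Hs Hfar.
  destruct (geodesic_triangle_slim H1 H2 H3 Hs) as [t [[Ht Hst]|Hst]]; [|eauto].
  pose proof (gprod_le_dist_geodesic p H2 Ht). pose proof (dist_triangle p (g1 s) (g2 t)). lra.
Qed.

Lemma slim_third_side_far y p q g1 g2 g3 :
  geodesic y p g1 -> geodesic p q g2 -> geodesic q y g3 ->
  forall t, 0 <= t <= d y p -> d p q + delta < d p (g1 t) ->
  exists t', 0 <= t' <= d q y /\ d (g1 t) (g3 t') <= delta.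
Proof.
  intros H1 H2 H3 t Ht Hfar.
  destruct (geodesic_triangle_slim H1 H2 H3 Ht) as [t' [[Ht' Htt']|Htt']]; [|eauto].
  pose proof (geodesic_dist_start H2 Ht'). pose proof (dist_triangle p (g2 t') (g1 t)).
  rewrite (dist_sym p (g2 t')), (dist_sym (g2 t') (g1 t)) in *. lra.
Qed.

Lemma geodesic_near_short_chain (w : nat -> X) c a b g s : 0 <= c -> (a <= b <= S a)%nat ->
  (forall i, (a <= i < b)%nat -> d (w i) (w (S i)) <= c) ->
  geodesic (w a) (w b) g -> 0 <= s <= d (w a) (w b) -> d (g s) (w a) <= c.
Proof.
  intros Hc Hab Hstep Hg Hs. rewrite (geodesic_dist_start Hg Hs).
  destruct (Nat.eq_dec b a) as [->|Hne].
  - rewrite dist_xx in Hs. lra.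
  - replace b with (S a) in Hs by lia. specialize (Hstep a ltac:(lia)). lra.
Qed.

(* Bisecting the chain halves its length at the cost of one [delta] per level. *)
Lemma geodesic_near_chain (w : nat -> X) c : 0 <= c -> forall J a b,
  (a <= b)%nat -> (b - a <= 2 ^ J)%nat ->
  (forall i, (a <= i < b)%nat -> d (w i) (w (S i)) <= c) ->
  forall g, geodesic (w a) (w b) g -> forall s, 0 <= s <= d (w a) (w b) ->
  exists i, (a <= i <= b)%nat /\ d (g s) (w i) <= delta * INR J + c.
Proof.
  intros Hc J. induction J as [|J IH]; intros a b Hab Hlen Hstep g Hg s Hs.
  { exists a. split; [lia|]. simpl (INR 0). rewrite Rmult_0_r, Rplus_0_l.
    simpl in Hlen.
    exact (geodesic_near_short_chain w (a := a) (b := b) Hc ltac:(lia) Hstep Hg Hs). }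
  destruct (le_lt_dec (b - a) 1) as [Hshort|Hlong].
  - exists a. split; [lia|].
    pose proof (geodesic_near_short_chain w (a := a) (b := b) Hc ltac:(lia) Hstep Hg Hs).
    pose proof (Rmult_le_pos _ _ delta_ge0 (pos_INR (S J))). lra.
  - set (h := ((a + b) / 2)%nat).
    pose proof (Nat.div_mod (a + b) 2 ltac:(lia)).
    pose proof (Nat.mod_upper_bound (a + b) 2 ltac:(lia)).
    rewrite Nat.pow_succ_r' in Hlen.
    destruct (geodesic_exists (w b) (w h)) as [g2 Hg2].
    destruct (geodesic_exists (w h) (w a)) as [g3 Hg3].
    rewrite S_INR, Rmult_plus_distr_l, Rmult_1_r.
    destruct (geodesic_triangle_slim Hg Hg2 Hg3 Hs) as [t [[Ht Hclose]|[Ht Hclose]]].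
    + assert (Ht' : 0 <= d (w b) (w h) - t <= d (w h) (w b)) by (rewrite (dist_sym (w h)); lra).
      destruct (IH h b ltac:(lia) ltac:(lia) ltac:(intros; apply Hstep; lia)
                  _ (geodesic_rev Hg2) _ Ht') as [i [Hi Hdi]].
      replace (d (w b) (w h) - (d (w b) (w h) - t)) with t in Hdi by ring.
      exists i. split; [lia|]. pose proof (dist_triangle (g s) (g2 t) (w i)). lra.
    + assert (Ht' : 0 <= d (w h) (w a) - t <= d (w a) (w h)) by (rewrite (dist_sym (w a)); lra).
      destruct (IH a h ltac:(lia) ltac:(lia) ltac:(intros; apply Hstep; lia)
                  _ (geodesic_rev Hg3) _ Ht') as [i [Hi Hdi]].
      replace (d (w h) (w a) - (d (w h) (w a) - t)) with t in Hdi by ring.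
      exists i. split; [lia|]. pose proof (dist_triangle (g s) (g3 t) (w i)). lra.
Qed.

Lemma geodesic_near_chain_or_ends (w : nat -> X) c J a b x y g : 0 <= c ->
  (a <= b)%nat -> (b - a <= 2 ^ J)%nat ->
  (forall i, (a <= i < b)%nat -> d (w i) (w (S i)) <= c) ->
  geodesic x y g -> forall s, 0 <= s <= d x y ->
  d (g s) (w a) <= 2 * delta + d x (w a) \/
  d (g s) (w b) <= 2 * delta + d y (w b) \/
  exists i, (a <= i <= b)%nat /\ d (g s) (w i) <= 2 * delta + delta * INR J + c.
Proof.
  intros Hc Hab Hlen Hstep Hg s Hs.
  destruct (geodesic_exists y (w b)) as [g2 Hg2].
  destruct (geodesic_exists (w b) x) as [g3 Hg3].
  destruct (geodesic_triangle_slim Hg Hg2 Hg3 Hs) as [t [[Ht Hd]|[Ht Hd]]].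
  - right; left.
    pose proof (geodesic_dist_end Hg2 Ht). pose proof (dist_triangle (g s) (g2 t) (w b)). lra.
  - destruct (geodesic_exists x (w a)) as [g4 Hg4].
    destruct (geodesic_exists (w a) (w b)) as [g5 Hg5].
    destruct (geodesic_triangle_slim Hg3 Hg4 Hg5 Ht) as [t' [[Ht' Hd']|[Ht' Hd']]].
    + left. pose proof (geodesic_dist_end Hg4 Ht').
      pose proof (dist_triangle (g s) (g3 t) (w a)).
      pose proof (dist_triangle (g3 t) (g4 t') (w a)).
      lra.
    + right; right.
      destruct (geodesic_near_chain w Hc J Hab Hlen Hstep Hg5 Ht') as [i [Hi Hdi]].
      exists i. split; [exact Hi|].
      pose proof (dist_triangle (g s) (g3 t) (w i)).
      pose proof (dist_triangle (g3 t) (g5 t') (w i)).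
      lra.
Qed.

Definition quasi_geodesic_seq (k : R) (v : nat -> X) : Prop :=
  forall i j, (i <= j)%nat -> INR j - INR i <= d (v i) (v j) <= k * (INR j - INR i) + k.

Section QuasiGeodesic.
Variables (k : R) (v : nat -> X).
Hypotheses (k_ge1 : 1 <= k) (qv : quasi_geodesic_seq k v).

Lemma quasi_geodesic_step i : d (v i) (v (S i)) <= 2 * k.
Proof. destruct (qv (Nat.le_succ_diag_r i)) as [_ H]. rewrite S_INR in H. lra. Qed.

Lemma quasi_geodesic_dist_le i j : d (v i) (v j) <= k * Rabs (INR i - INR j) + k.
Proof.
  destruct (le_lt_dec i j) as [Hij|Hji].
  - destruct (qv Hij) as [_ H]. apply le_INR in Hij.
    rewrite Rabs_left1 by lra. replace (- (INR i - INR j)) with (INR j - INR i) by ring. exact H.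
  - destruct (qv (Nat.lt_le_incl _ _ Hji)) as [_ H]. apply lt_INR in Hji.
    rewrite dist_sym, Rabs_right by lra. exact H.
Qed.

(* Near the chain end [v i1] only the weaker bound [2 delta + e] is known, [e] being the
   distance from [v i1] to the geodesic; it is needed only when the chain was not truncated
   at [v 0], i.e. when [i1 + K = i0] (and symmetrically on the right). *)
Definition left_close (rho e : R) (i1 i0 K : nat) (u : X) : Prop :=
  (d u (v i1) <= 2 * delta + e /\ (i1 + K)%nat = i0) \/
  exists a, (i1 <= a <= i0)%nat /\ d u (v a) <= rho.

Definition right_close (rho e : R) (i0 i2 K : nat) (u : X) : Prop :=
  (d u (v i2) <= 2 * delta + e /\ i2 = (i0 + K)%nat) \/
  exists b, (i0 <= b <= i2)%nat /\ d u (v b) <= rho.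

Lemma left_close_end rho e (i1 i0 K : nat) u : (i1 <= i0)%nat -> 2 * delta <= rho ->
  (e = 0 \/ (i1 + K)%nat = i0) -> d u (v i1) <= 2 * delta + e -> left_close rho e i1 i0 K u.
Proof.
  intros Hi Hrho [H0|HK] Hu.
  - right. exists i1. split; [lia|lra].
  - left. split; assumption.
Qed.

Lemma right_close_end rho e (i0 i2 K : nat) u : (i0 <= i2)%nat -> 2 * delta <= rho ->
  (e = 0 \/ i2 = (i0 + K)%nat) -> d u (v i2) <= 2 * delta + e -> right_close rho e i0 i2 K u.
Proof.
  intros Hi Hrho [H0|HK] Hu.
  - right. exists i2. split; [lia|lra].
  - left. split; assumption.
Qed.

Lemma geodesic_left_or_right_close J (i1 i0 i2 K : nat) x y g :
  (i1 <= i0 <= i2)%nat -> (i2 - i1 <= 2 ^ J)%nat ->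
  (d x (v i1) = 0 \/ (i1 + K)%nat = i0) -> (d y (v i2) = 0 \/ i2 = (i0 + K)%nat) ->
  geodesic x y g -> forall t, 0 <= t <= d x y ->
  left_close (morse_rho k delta J) (d x (v i1)) i1 i0 K (g t) \/
  right_close (morse_rho k delta J) (d y (v i2)) i0 i2 K (g t).
Proof.
  intros Hi HJ Hx Hy Hg t Ht.
  assert (Hrho : 2 * delta <= morse_rho k delta J).
  { unfold morse_rho. pose proof (Rmult_le_pos _ _ delta_ge0 (pos_INR J)). lra. }
  destruct (geodesic_near_chain_or_ends v (c := 2 * k) J (a := i1) (b := i2)
              ltac:(lra) ltac:(lia) HJ (fun i _ => quasi_geodesic_step i) Hg Ht)
    as [HA|[HB|[i [Hi' Hdi]]]].
  - left. apply left_close_end; auto; lia.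
  - right. apply right_close_end; auto; lia.
  - destruct (le_lt_dec i i0) as [Hle|Hlt]; [left|right];
      right; exists i; split; (lia || exact Hdi).
Qed.

Lemma close_crossing_bound (D i1 i0 i2 : nat) rho e1 e2 u u' :
  (i1 <= i0 <= i2)%nat -> 2 * delta <= rho -> e1 <= INR D -> e2 <= INR D -> d u u' <= 1 ->
  left_close rho e1 i1 i0 (3 * D) u -> right_close rho e2 i0 i2 (3 * D) u' ->
  INR D - 1 < d (v i0) u' -> INR D <= 1 + 2 * k + (2 * k + 1) * rho.
Proof.
  intros Hi Hrho He1 He2 Huu [[Hl HK1]|[a [Ha Hl]]] [[Hr HK2]|[b [Hb Hr]]] Hfar;
    pose proof (pos_INR D); assert (2 * delta <= 2 * k * rho) by nra.
  - destruct (qv (i:=i1) (j:=i2) ltac:(lia)) as [Hq _].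
    assert (INR i2 = INR i1 + 6 * INR D)
      by (rewrite HK2, <- HK1, !plus_INR, mult_INR; simpl (INR 3); ring).
    pose proof (dist_triangle (v i1) u (v i2)). pose proof (dist_triangle u u' (v i2)).
    rewrite (dist_sym (v i1) u) in *. lra.
  - destruct (qv (i:=i1) (j:=b) ltac:(lia)) as [Hq _].
    assert (INR i0 <= INR b) by (apply le_INR; lia).
    assert (INR i0 = INR i1 + 3 * INR D)
      by (rewrite <- HK1, plus_INR, mult_INR; simpl (INR 3); ring).
    pose proof (dist_triangle (v i1) u (v b)). pose proof (dist_triangle u u' (v b)).
    rewrite (dist_sym (v i1) u) in *. lra.
  - destruct (qv (i:=a) (j:=i2) ltac:(lia)) as [Hq _].
    assert (INR a <= INR i0) by (apply le_INR; lia).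
    assert (INR i2 = INR i0 + 3 * INR D)
      by (rewrite HK2, plus_INR, mult_INR; simpl (INR 3); ring).
    pose proof (dist_triangle (v a) u (v i2)). pose proof (dist_triangle u u' (v i2)).
    rewrite (dist_sym (v a) u) in *. lra.
  - destruct (qv (i:=a) (j:=b) ltac:(lia)) as [Hq _].
    destruct (qv (i:=i0) (j:=b) ltac:(lia)) as [_ Hq'].
    assert (INR a <= INR i0) by (apply le_INR; lia).
    pose proof (dist_triangle (v a) u (v b)). pose proof (dist_triangle u u' (v b)).
    pose proof (dist_triangle (v i0) (v b) u').
    rewrite (dist_sym (v a) u), (dist_sym (v b) u') in *.
    assert (k * (INR b - INR i0) <= k * (2 * rho + 1)) by (apply Rmult_le_compat_l; lra).
    lra.
Qed.

Lemma geodesic_anchor m G (r : R) i (Q : Prop) : geodesic (v 0%nat) (v m) G -> 0 <= r ->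
  (forall j, (j <= m)%nat -> exists s, 0 <= s <= d (v 0%nat) (v m) /\ d (G s) (v j) <= r) ->
  (i <= m)%nat -> (i = 0%nat \/ i = m \/ Q) ->
  exists s, 0 <= s <= d (v 0%nat) (v m) /\ d (G s) (v i) <= r /\ (d (G s) (v i) = 0 \/ Q).
Proof.
  intros HG Hr Hnear Hi Hend. pose proof (dist_ge0 (v 0%nat) (v m)).
  destruct (classic Q) as [HQ|HnQ].
  - destruct (Hnear i Hi) as [s [Hs Hds]]. exists s. auto.
  - destruct Hend as [->|[->|HQ]]; [| |contradiction].
    + exists 0. rewrite (geodesic_start HG), dist_xx. repeat split; auto; lra.
    + exists (d (v 0%nat) (v m)). rewrite (geodesic_end HG), dist_xx. repeat split; auto; lra.
Qed.

(* The subsegment of the geodesic between the projections of [v (i0 - 3 D)] and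
   [v (i0 + 3 D)] passes, within distance [1], from points near the chain before [i0] to
   points near the chain after [i0]. *)
Lemma far_index_bound m G (D i0 J : nat) : geodesic (v 0%nat) (v m) G -> (i0 <= m)%nat ->
  (forall j, (j <= m)%nat -> exists s, 0 <= s <= d (v 0%nat) (v m) /\ d (G s) (v j) <= INR D) ->
  (forall s, 0 <= s <= d (v 0%nat) (v m) -> INR D - 1 < d (v i0) (G s)) ->
  (6 * D <= 2 ^ J)%nat -> INR D <= morse_bound k delta J.
Proof.
  intros HG Hi0 Hnear Hfar HJ.
  set (K := (3 * D)%nat). set (i1 := (i0 - K)%nat). set (i2 := Nat.min m (i0 + K)).
  set (rho := morse_rho k delta J).
  assert (Hrho : 2 * delta <= rho).
  { unfold rho, morse_rho. pose proof (Rmult_le_pos _ _ delta_ge0 (pos_INR J)). lra. }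
  destruct (geodesic_anchor (i := i1) (Q := (i1 + K)%nat = i0) HG (pos_INR D) Hnear
              ltac:(lia) ltac:(lia)) as [sy [Hsy [Hey Hy]]].
  destruct (geodesic_anchor (i := i2) (Q := i2 = (i0 + K)%nat) HG (pos_INR D) Hnear
              ltac:(lia) ltac:(lia)) as [sz [Hsz [Hez Hz]]].
  destruct (geodesic_subsegment HG Hsy Hsz) as [g [Hg Hon]].
  destruct (geodesic_crossing (left_close rho (d (G sy) (v i1)) i1 i0 K)
              (right_close rho (d (G sz) (v i2)) i0 i2 K) Hg)
    as [t1 [t2 [Ht1 [Ht2 [Hclose [HL HR]]]]]].
  - apply geodesic_left_or_right_close; auto; lia.
  - apply left_close_end; auto; [lia|lra].
  - apply right_close_end; auto; [lia|lra].
  - apply (close_crossing_bound D (i1 := i1) (i0 := i0) (i2 := i2) ltac:(lia)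
             Hrho Hey Hez Hclose HL HR).
    destruct (Hon t2 Ht2) as [s [Hs ->]]. exact (Hfar s Hs).
Qed.

Lemma quasi_geodesic_near_geodesic m G : geodesic (v 0%nat) (v m) G ->
  forall i, (i <= m)%nat ->
  exists s, 0 <= s <= d (v 0%nat) (v m) /\ d (G s) (v i) <= morse_const k delta.
Proof.
  intros HG.
  set (P := fun D : nat => forall j, (j <= m)%nat ->
              exists s, 0 <= s <= d (v 0%nat) (v m) /\ d (G s) (v j) <= INR D).
  destruct (INR_unbounded (k * INR m + k)) as [D0 HD0].
  assert (HP0 : P D0).
  { intros j Hj. exists 0. pose proof (dist_ge0 (v 0%nat) (v m)). split; [lra|].
    rewrite (geodesic_start HG). destruct (qv (Nat.le_0_l j)) as [_ Hq]. simpl (INR 0) in Hq.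
    assert (k * INR j <= k * INR m) by (apply Rmult_le_compat_l; [lra|apply le_INR, Hj]). lra. }
  destruct (ex_least_nat P _ HP0) as [D [HD Hmin]].
  enough (INR D <= morse_const k delta)
    by (intros i Hi; destruct (HD i Hi) as [s [Hs Hds]]; exists s; split; [exact Hs|lra]).
  apply dyadic_bound. intros J HJ. destruct D as [|D'].
  - apply morse_bound_ge0; assumption.
  - assert (Hfar : exists i0, (i0 <= m)%nat /\
                   forall s, 0 <= s <= d (v 0%nat) (v m) -> INR D' < d (v i0) (G s)).
    { apply NNPP. intro Hno. apply (Hmin D' (Nat.lt_succ_diag_r D')). intros j Hj.
      apply NNPP. intro Hj'. apply Hno. exists j. split; [exact Hj|]. intros s Hs.
      apply Rnot_le_lt. intro Hle. apply Hj'. exists s. rewrite (dist_sym (G s)). auto. }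
    destruct Hfar as [i0 [Hi0 Hfar]].
    eapply far_index_bound; [exact HG|exact Hi0|exact HD| |exact HJ].
    intros s Hs. rewrite S_INR. specialize (Hfar s Hs). lra.
Qed.

Lemma geodesic_near_quasi_geodesic {m G} : geodesic (v 0%nat) (v m) G ->
  forall s, 0 <= s <= d (v 0%nat) (v m) ->
  exists j, (j <= m)%nat /\ d (G s) (v j) <= 3 * morse_const k delta + 2 * k.
Proof.
  intros HG s Hs. set (H := morse_const k delta). set (L := d (v 0%nat) (v m)) in *.
  destruct (choice (fun i t => (i <= m)%nat -> 0 <= t <= L /\ d (G t) (v i) <= H))
    as [tau Htau].
  { intro i. destruct (le_lt_dec i m) as [Hi|Hi].
    - destruct (quasi_geodesic_near_geodesic HG Hi) as [t Ht]. exists t. auto.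
    - exists 0. lia. }
  assert (Hstep : forall i, (i < m)%nat -> tau (S i) <= tau i + (2 * H + 2 * k)).
  { intros i Hi. destruct (Htau i ltac:(lia)) as [Hti Hdi].
    destruct (Htau (S i) Hi) as [HtSi HdSi].
    pose proof (geodesic_dist HG HtSi Hti) as Hdist. pose proof (Rle_abs (tau (S i) - tau i)).
    pose proof (dist_triangle (G (tau (S i))) (v (S i)) (G (tau i))).
    pose proof (dist_triangle (v (S i)) (v i) (G (tau i))).
    pose proof (quasi_geodesic_step i).
    rewrite (dist_sym (v (S i)) (v i)), (dist_sym (v i) (G (tau i))) in *. lra. }
  destruct (Htau 0%nat (Nat.le_0_l m)) as [Ht0 Hd0]. destruct (Htau m (le_n m)) as [Htm Hdm].
  assert (HH : 0 <= H) by (apply morse_bound_ge0; assumption).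
  destruct (Rlt_le_dec s (tau 0%nat)) as [Hs0|Hs0].
  { exists 0%nat. split; [lia|]. rewrite (geodesic_dist_start HG Hs).
    rewrite (geodesic_dist_start HG Ht0) in Hd0. lra. }
  destruct (Rle_lt_dec s (tau m)) as [Hsm|Hsm].
  - destruct (discrete_ivt tau (c := 2 * H + 2 * k) ltac:(lra) Hstep (conj Hs0 Hsm))
      as [i [Hi Hti]].
    exists i. split; [exact Hi|]. destruct (Htau i Hi) as [Hti' Hdi].
    pose proof (dist_triangle (G s) (G (tau i)) (v i)).
    rewrite (geodesic_dist HG Hs Hti'), Rabs_right in * by lra. lra.
  - exists m. split; [lia|]. rewrite (geodesic_dist_end HG Hs).
    rewrite (geodesic_dist_end HG Htm) in Hdm. lra.
Qed.

End QuasiGeodesic.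

Definition near_const (k delta : R) : R := 4 * morse_const k delta + 2 * delta + 2 * k.
Definition fellow_const (k delta : R) : R := (k + 1) * near_const k delta + k.

Section FellowTravellers.
Variables (k : R) (alpha beta : nat -> X).
Hypotheses (k_ge1 : 1 <= k)
  (qa : quasi_geodesic_seq k alpha) (qb : quasi_geodesic_seq k beta)
  (sep : forall i j, Rabs (INR i - INR j) <= d (alpha i) (beta j))
  (same : same_boundary_point d alpha beta).

(* For large [m] the Gromov product of [alpha m] and [beta m] at [alpha 0] is huge, so the
   point of [[alpha 0, alpha m]] near [alpha n] is not near [[alpha m, beta m]]; it is near
   [[beta m, alpha 0]] and, being far from [alpha 0], then near [[beta 0, beta m]]. *)
Lemma eventually_near_other :
  exists N, forall n, (N <= n)%nat -> exists j, d (alpha n) (beta j) <= near_const k delta.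
Proof.
  set (H := morse_const k delta).
  destruct (INR_unbounded (d (alpha 0%nat) (beta 0%nat) + H + 2 * delta)) as [N HN].
  exists N. intros n Hn. apply le_INR in Hn.
  destruct same as [_ [_ Hgprod]].
  destruct (Hgprod (alpha 0%nat) (k * INR n + k + H + delta + 1)) as [N1 HN1].
  set (m := Nat.max N1 n).
  pose proof (HN1 m m ltac:(lia) ltac:(lia)) as Hfar.
  destruct (geodesic_exists (alpha 0%nat) (alpha m)) as [Ga HGa].
  destruct (geodesic_exists (alpha m) (beta m)) as [Gab HGab].
  destruct (geodesic_exists (beta m) (alpha 0%nat)) as [Gba HGba].
  destruct (geodesic_exists (alpha 0%nat) (beta 0%nat)) as [G0 HG0].
  destruct (geodesic_exists (beta 0%nat) (beta m)) as [Gb HGb].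
  destruct (quasi_geodesic_near_geodesic k_ge1 qa HGa (i := n) ltac:(lia)) as [s [Hs Hns]].
  fold H in Hns.
  destruct (qa (Nat.le_0_l n)) as [Hlo Hhi]. simpl (INR 0) in Hlo, Hhi.
  pose proof (dist_triangle (alpha 0%nat) (alpha n) (Ga s)).
  pose proof (dist_triangle (alpha 0%nat) (Ga s) (alpha n)).
  pose proof (dist_sym (alpha n) (Ga s)).
  destruct (slim_third_side_gprod HGa HGab HGba Hs) as [t [Ht Hst]]; [lra|].
  pose proof (dist_triangle (alpha 0%nat) (Gba t) (Ga s)).
  pose proof (dist_sym (Gba t) (Ga s)).
  destruct (slim_third_side_far HGba HG0 HGb Ht) as [t' [Ht' Htt']]; [lra|].
  destruct (geodesic_near_quasi_geodesic k_ge1 qb HGb Ht') as [j [_ Hj]].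
  exists j. unfold near_const. fold H in Hj |- *.
  pose proof (dist_triangle (alpha n) (Ga s) (beta j)).
  pose proof (dist_triangle (Ga s) (Gba t) (beta j)).
  pose proof (dist_triangle (Gba t) (Gb t') (beta j)).
  lra.
Qed.

Lemma eventually_fellow :
  exists N, forall n, (N <= n)%nat -> d (alpha n) (beta n) <= fellow_const k delta.
Proof.
  destruct eventually_near_other as [N HN]. exists N. intros n Hn.
  destruct (HN n Hn) as [j Hj].
  pose proof (sep n j) as Hsep. rewrite Rabs_minus_sym in Hsep.
  pose proof (quasi_geodesic_dist_le qb j n).
  assert (k * Rabs (INR j - INR n) <= k * near_const k delta) by (apply Rmult_le_compat_l; lra).
  pose proof (dist_triangle (alpha n) (beta j) (beta n)).
  unfold fellow_const. lra.
Qed.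

End FellowTravellers.

End HyperbolicSpace.

Lemma geodesic_ray_dist V (E : V -> V -> Prop) r : geodesic_ray E r ->
  forall i j, INR (gd E (r i) (r j)) = Rabs (INR i - INR j).
Proof.
  intros Hr i j. rewrite Hr. destruct (Nat.leb_spec i j) as [Hij|Hji].
  - rewrite minus_INR by exact Hij. apply le_INR in Hij. rewrite Rabs_left1; lra.
  - rewrite minus_INR by lia. apply lt_INR in Hji. rewrite Rabs_right; lra.
Qed.

Section QiSections.
Variables (X V : Type) (d : X -> X -> R) (E : V -> V -> Prop) (Pi : X -> tpt V)
  (r : nat -> V) (k : R).
Hypotheses (ray : geodesic_ray E r) (Pi_lip : forall x y, tdist E (Pi x) (Pi y) <= d x y).

Lemma qi_section_sep s s' : qi_section d E Pi r k s -> qi_section d E Pi r k s' ->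
  forall i j, Rabs (INR i - INR j) <= d (s i) (s' j).
Proof.
  intros [Hs _] [Hs' _] i j. pose proof (Pi_lip (s i) (s' j)) as Hlip.
  rewrite Hs, Hs' in Hlip. change (INR (gd E (r j) (r i)) <= d (s i) (s' j)) in Hlip.
  rewrite (geodesic_ray_dist ray), Rabs_minus_sym in Hlip. exact Hlip.
Qed.

Lemma qi_section_quasi_geodesic s : qi_section d E Pi r k s -> quasi_geodesic_seq d k s.
Proof.
  intros Hs i j Hij. pose proof (qi_section_sep Hs Hs i j) as Hlo.
  destruct Hs as [_ Hqi]. destruct (Hqi i j) as [_ Hhi].
  rewrite (geodesic_ray_dist ray) in Hhi. apply le_INR in Hij.
  rewrite Rabs_left1 in Hlo, Hhi by lra. split; lra.
Qed.

End QiSections.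

Theorem lemma3p4 :
  forall (delta0 L0 : R) (f : R -> R) (k : R), 1 <= k ->
  exists R0 : R, 0 <= R0 /\
  forall (X V : Type) (d : X -> X -> R) (E : V -> V -> Prop) (Pi : X -> tpt V)
         (db : V -> X -> X -> R) (de : V -> V -> X -> X -> R),
    tree_of_hyp_spaces d E Pi db de delta0 L0 f ->
    hyperbolic (@full X) d delta0 ->
    forall (r : nat -> V), geodesic_ray E r ->
    forall (alpha beta : nat -> X),
      qi_section d E Pi r k alpha -> qi_section d E Pi r k beta ->
      same_boundary_point d alpha beta ->
      exists N : nat, forall n : nat, (N <= n)%nat ->
        db (r n) (alpha n) (beta n) <= R0.
Proof.
  intros delta L0 f k Hk.
  exists (Rmax 0 (f (fellow_const k delta))). split; [apply Rmax_l|].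
  intros X V d E Pi db de Htree Hhyp r Hr alpha beta Ha Hb Hsame.
  destruct Htree as [_ [_ [_ [_ [_ [Hlip [_ [_ [Hdelta [_ [_ [_ [_ [Hvertex _]]]]]]]]]]]]]].
  destruct (eventually_fellow Hhyp Hdelta Hk
              (qi_section_quasi_geodesic Hr Hlip Ha) (qi_section_quasi_geodesic Hr Hlip Hb)
              (qi_section_sep Hr Hlip Ha Hb) Hsame) as [N HN].
  exists N. intros n Hn.
  apply Rle_trans with (f (fellow_const k delta)); [|apply Rmax_r].
  apply (Hvertex (r n)); [apply Ha|apply Hb|exact (HN n Hn)].
Qed.
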